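(* Let $F$ be the elementary cellular automaton with rule number 172. For every nonempty finite word $u\in\{0,1\}^*$, the deterministic communication complexity of $\textsc{SInv}_{F,u}$ restricted to inputs of length $n$ is bounded by a constant independent of $n$.
   Context: An elementary cellular automaton (ECA) with rule number $N\in\{0,\dots,255\}$ is the map $F:\{0,1\}^{\mathbb Z}\to\{0,1\}^{\mathbb Z}$ given by $F(x)_i=f(x_{i-1},x_i,x_{i+1})$. Here the local rule $f:\{0,1\}^3\to\{0,1\}$ is determined by $N=\sum_{a,b,c\in\{0,1\}}2^{4a+2b+c}f(a,b,c)$. For a nonempty finite word $u$, $p_u\in\{0,1\}^{\mathbb Z}$ is defined by $(p_u)_i=u_{i\bmod |u|}$. For a finite word $x$, $p_u[x]$ is the configuration equal to $x$ on positions $0,\dots,|x|-1$ and to $p_u$ elsewhere. $\textsc{SInv}_{F,u}$ is the decision problem: on input a finite word $x$, decide whether there is an integer $w$ such that for all $t\ge0$ the set of positions where $F^t(p_u)$ and $F^t(p_u[x])$ differ is contained in an interval of length $w$. For each $n$, it is regarded as a function $\{0,1\}^n\to\{0,1\}$. For a function $g:X\times Y\to Z$, $D(g)$ is the minimal depth of a deterministic two-party protocol computing $g$. In such a protocol, Alice knows $x$ and Bob knows $y$. The protocol is a binary tree: each internal node is labelled by a function of Alice's input only or of Bob's input only, with values in $\{\text{left},\text{right}\}$, and each leaf is labelled by an output value. For $g:\{0,1\}^m\to Z$, set $D(g)=\max_{0\le i<m}D(g_i)$, where $g_i:\{0,1\}^i\times\{0,1\}^{m-i}\to Z$ is $g_i(x,y)=g(xy)$.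 *)

From Stdlib Require Import ZArith List Arith Bool.
Import ListNotations.
Open Scope Z_scope.

Definition eca_local (N : Z) (a b c : bool) : bool :=
  Z.testbit N (4 * Z.b2z a + 2 * Z.b2z b + Z.b2z c).

Definition config := Z -> bool.

Definition eca (N : Z) (x : config) : config :=
  fun i => eca_local N (x (i - 1)) (x i) (x (i + 1)).

Definition eca_iter (N : Z) (t : nat) (x : config) : config :=
  Nat.iter t (eca N) x.

Definition periodic (u : list bool) : config :=
  fun i => nth (Z.to_nat (i mod Z.of_nat (length u))) u false.

Definition patch (u x : list bool) : config :=
  fun i => if (0 <=? i) && (i <? Z.of_nat (length x))
           then nth (Z.to_nat i) x false
           else periodic u i.

Definition SInv (N : Z) (u : list bool) (x : list bool) : Prop :=
  exists w : Z, forall t : nat, exists a : Z, forall i : Z,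
    eca_iter N t (periodic u) i <> eca_iter N t (patch u x) i ->
    a <= i < a + w.

Inductive protocol : Type :=
| Leaf (out : bool)
| AliceNode (q : list bool -> bool) (l r : protocol)
| BobNode (q : list bool -> bool) (l r : protocol).

Fixpoint depth (p : protocol) : nat :=
  match p with
  | Leaf _ => 0
  | AliceNode _ l r | BobNode _ l r => S (Nat.max (depth l) (depth r))
  end.

Fixpoint run (p : protocol) (x y : list bool) : bool :=
  match p with
  | Leaf b => b
  | AliceNode q l r => if q x then run l x y else run r x y
  | BobNode q l r => if q y then run l x y else run r x y
  end.

(* p computes g_i : {0,1}^i x {0,1}^(m-i) -> {0,1}, g_i(x,y) = g(xy),
   where the decision problem g is given as a predicate (output 1 iff true). *)
Definition computes (p : protocol) (g : list bool -> Prop) (m i : nat) : Prop :=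
  forall x y : list bool, length x = i -> length y = (m - i)%nat ->
    (run p x y = true <-> g (x ++ y)).

Definition D_split_le (g : list bool -> Prop) (m i d : nat) : Prop :=
  exists p : protocol, (depth p <= d)%nat /\ computes p g m i.

(* D(g restricted to {0,1}^m) = max_{0<=i<m} D(g_i) <= d *)
Definition D_le (g : list bool -> Prop) (m d : nat) : Prop :=
  forall i : nat, (i < m)%nat -> D_split_le g m i d.

(** Rule 172 maps [x] to [i |-> if x (i-1) then x (i+1) else x i], so a pair [00] is
    frozen forever.  If [p_u] contains [00], frozen copies of it on both sides of the
    patch fence the perturbation in, and [SInv] always holds.  Otherwise, a
    configuration without [00] becomes after one step one whose zeros are at distance
    at least three, on which the rule is the left shift: if [p_u[x]] has no [00] the
    perturbation is merely translated.  If it has one, that pair stays put while the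
    leftmost [00] drifts to the left by one cell every two steps; since [F^t(p_u)] has no
    [00], both pairs are witnessed by differences, and the perturbation spreads without
    bound.  Hence [SInv] only asks whether the word [p_u(-1) x p_u(|x|)] contains [00],
    which Alice and Bob decide by exchanging three bits. *)

From Stdlib Require Import ZArith List Arith Bool Lia Classical Zwf.
Import ListNotations.
Open Scope Z_scope.

Lemma eca_iter_succ_r N t x : eca_iter N (S t) x = eca_iter N t (eca N x).
Proof.
  induction t as [|t IH]; [reflexivity|].
  change (eca N (eca_iter N (S t) x) = eca N (eca_iter N t (eca N x))).
  now rewrite IH.
Qed.

Lemma eca_agree N x y i :
  x (i - 1) = y (i - 1) -> x i = y i -> x (i + 1) = y (i + 1) -> eca N x i = eca N y i.
Proof. intros H1 H2 H3. unfold eca. now rewrite H1, H2, H3. Qed.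

Lemma eca172E x i : eca 172 x i = if x (i - 1) then x (i + 1) else x i.
Proof. unfold eca. now destruct (x (i - 1)), (x i), (x (i + 1)). Qed.

Definition zero_pair (x : config) (i : Z) : Prop := x i = false /\ x (i + 1) = false.

Definition zero_pair_free (x : config) : Prop := forall i, ~ zero_pair x i.

Lemma zero_pair_eca x i : zero_pair x i -> zero_pair (eca 172 x) i.
Proof.
  intros [H0 H1]. unfold zero_pair. rewrite !eca172E.
  replace (i + 1 - 1) with i by lia. rewrite H0, H1. now destruct (x (i - 1)).
Qed.

Lemma zero_pair_iter x i t : zero_pair x i -> zero_pair (eca_iter 172 t x) i.
Proof. intros H. induction t as [|t IH]; [exact H|]. now apply zero_pair_eca. Qed.

Lemma zero_pair_eca_inv x i :
  zero_pair (eca 172 x) i -> zero_pair x i \/ zero_pair x (i + 1).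
Proof.
  unfold zero_pair. rewrite !eca172E. replace (i + 1 - 1) with i by lia.
  destruct (x (i - 1)), (x i), (x (i + 1)), (x (i + 1 + 1)); intuition congruence.
Qed.

Lemma zero_pair_free_eca x : zero_pair_free x -> zero_pair_free (eca 172 x).
Proof.
  intros H i Hi. destruct (zero_pair_eca_inv x i Hi) as [Hp|Hp]; exact (H _ Hp).
Qed.

Lemma zero_pair_free_iter x t : zero_pair_free x -> zero_pair_free (eca_iter 172 t x).
Proof. intros H. induction t as [|t IH]; [exact H|]. now apply zero_pair_free_eca. Qed.

Lemma zero_pair_free_differs x y k :
  zero_pair_free x -> zero_pair y k -> exists i, k <= i <= k + 1 /\ x i <> y i.
Proof.
  intros Hx [Hk Hk1].
  destruct (x k) eqn:E; [exists k; split; [lia|congruence]|].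
  destruct (x (k + 1)) eqn:E1; [exists (k + 1); split; [lia|congruence]|].
  exfalso. exact (Hx k (conj E E1)).
Qed.

Definition sparse_zeros (y : config) : Prop :=
  forall i, y i = false -> y (i + 1) = true /\ y (i + 2) = true.

Lemma sparse_zeros_zero_pair_free y : sparse_zeros y -> zero_pair_free y.
Proof. intros H i [H0 H1]. destruct (H i H0) as [H1' _]. congruence. Qed.

Lemma sparse_zeros_eca x : zero_pair_free x -> sparse_zeros (eca 172 x).
Proof.
  intros H i. rewrite !eca172E.
  replace (i + 1 - 1) with i by lia. replace (i + 2 - 1) with (i + 1) by lia.
  replace (i + 1 + 1) with (i + 2) by lia. replace (i + 2 + 1) with (i + 3) by lia.
  pose proof (H (i - 1)) as A. pose proof (H i) as B.
  pose proof (H (i + 1)) as C. pose proof (H (i + 2)) as D.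
  unfold zero_pair in *. replace (i - 1 + 1) with i in A by lia.
  replace (i + 1 + 1) with (i + 2) in C by lia. replace (i + 2 + 1) with (i + 3) in D by lia.
  destruct (x (i - 1)), (x i), (x (i + 1)), (x (i + 2)), (x (i + 3)); intuition congruence.
Qed.

Lemma eca172_sparse_shift y i : sparse_zeros y -> eca 172 y i = y (i + 1).
Proof.
  intros H. rewrite eca172E. destruct (y (i - 1)) eqn:E; [reflexivity|].
  destruct (H _ E) as [H1 H2].
  replace (i - 1 + 1) with i in H1 by lia. replace (i - 1 + 2) with (i + 1) in H2 by lia.
  now rewrite H1, H2.
Qed.

Lemma eca172_iter_sparse_shift y t i :
  sparse_zeros y -> eca_iter 172 t y i = y (i + Z.of_nat t).
Proof.
  revert y i. induction t as [|t IH]; intros y i Hy.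
  - simpl. f_equal. lia.
  - rewrite eca_iter_succ_r, IH, eca172_sparse_shift by
      auto using sparse_zeros_eca, sparse_zeros_zero_pair_free.
    f_equal. lia.
Qed.

Lemma patch_outside u x i :
  i < 0 \/ Z.of_nat (length x) <= i -> patch u x i = periodic u i.
Proof.
  intros Hi. unfold patch.
  destruct (Z.leb_spec 0 i), (Z.ltb_spec i (Z.of_nat (length x))); simpl; auto; lia.
Qed.

Lemma periodic_shift u i m :
  u <> nil -> periodic u (i + m * Z.of_nat (length u)) = periodic u i.
Proof.
  intros Hu. unfold periodic. rewrite Z.mod_add; [reflexivity|].
  destruct u; [congruence|simpl; lia].
Qed.

Lemma zero_pair_periodic_shift u k m :
  u <> nil -> zero_pair (periodic u) k -> zero_pair (periodic u) (k + m * Z.of_nat (length u)).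
Proof.
  intros Hu [H0 H1]. unfold zero_pair.
  replace (k + m * Z.of_nat (length u) + 1) with (k + 1 + m * Z.of_nat (length u)) by lia.
  now rewrite !periodic_shift.
Qed.

Lemma eca172_agree_outside_walls X Y L R :
  zero_pair X L -> zero_pair Y L -> zero_pair X R -> zero_pair Y R ->
  (forall i, i < L \/ R + 1 < i -> X i = Y i) ->
  forall i, i < L \/ R + 1 < i -> eca 172 X i = eca 172 Y i.
Proof.
  intros [XL _] [YL _] [_ XR] [_ YR] Hout i Hi.
  assert (Hj : forall j, j < L \/ R + 1 < j \/ j = L \/ j = R + 1 -> X j = Y j).
  { intros j [Hj|[Hj|[->| ->]]]; auto; congruence. }
  apply eca_agree; apply Hj; lia.
Qed.

Lemma eca172_iter_agree_outside_walls X Y L R :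
  zero_pair X L -> zero_pair Y L -> zero_pair X R -> zero_pair Y R ->
  (forall i, i < L \/ R + 1 < i -> X i = Y i) ->
  forall t i, i < L \/ R + 1 < i -> eca_iter 172 t X i = eca_iter 172 t Y i.
Proof.
  intros XL YL XR YR Hout t. induction t as [|t IH]; [exact Hout|].
  now apply eca172_agree_outside_walls; try apply zero_pair_iter.
Qed.

Lemma SInv172_of_periodic_zero_pair u x k :
  u <> nil -> zero_pair (periodic u) k -> SInv 172 u x.
Proof.
  intros Hu Hk.
  set (p := Z.of_nat (length u)). set (n := Z.of_nat (length x)).
  assert (Hp : 1 <= p) by (unfold p; destruct u; [congruence|simpl; lia]).
  set (L := k + - (Z.abs k + 2) * p). set (R := k + (Z.abs k + n + 1) * p).
  assert (HL : L <= -2) by (unfold L; nia).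
  assert (HR : n + 1 <= R) by (unfold R; nia).
  assert (Hout : forall i, i < 0 \/ n <= i -> periodic u i = patch u x i)
    by (intros i Hi; symmetry; now apply patch_outside).
  assert (PL : zero_pair (periodic u) L) by now apply zero_pair_periodic_shift.
  assert (PR : zero_pair (periodic u) R) by now apply zero_pair_periodic_shift.
  assert (QL : zero_pair (patch u x) L)
    by (destruct PL; split; rewrite <- Hout by lia; assumption).
  assert (QR : zero_pair (patch u x) R)
    by (destruct PR; split; rewrite <- Hout by lia; assumption).
  assert (Hagree : forall t i, i < L \/ R + 1 < i ->
            eca_iter 172 t (periodic u) i = eca_iter 172 t (patch u x) i).
  { apply eca172_iter_agree_outside_walls; auto. intros i Hi. apply Hout. lia. }
  exists (R + 2 - L). intros t. exists L. intros i Hd.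
  destruct (Z_lt_le_dec i L); [exfalso|destruct (Z_lt_le_dec (R + 1) i); [exfalso|lia]];
    apply Hd, Hagree; lia.
Qed.

Lemma SInv172_of_zero_pair_free u x :
  zero_pair_free (periodic u) -> zero_pair_free (patch u x) -> SInv 172 u x.
Proof.
  intros HP HQ. set (n := Z.of_nat (length x)).
  assert (Hout : forall i, i < 0 \/ n <= i -> periodic u i = patch u x i)
    by (intros i Hi; symmetry; now apply patch_outside).
  exists (n + 2). intros [|t].
  - exists (-1). intros i Hd. simpl in Hd.
    destruct (Z_lt_le_dec i 0); [rewrite Hout in Hd by lia; congruence|].
    destruct (Z_lt_le_dec i n); [lia|]. rewrite Hout in Hd by lia; congruence.
  - exists (-1 - Z.of_nat t). intros i Hd.
    rewrite !eca_iter_succ_r, !eca172_iter_sparse_shift in Hd by now apply sparse_zeros_eca.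
    destruct (Z_lt_le_dec (i + Z.of_nat t) (-1));
      [|destruct (Z_lt_le_dec n (i + Z.of_nat t)); [|lia]];
      exfalso; apply Hd, eca_agree; apply Hout; lia.
Qed.

Definition leftmost_zero_pair (y : config) (k : Z) : Prop :=
  zero_pair y k /\ forall i, i < k -> ~ zero_pair y i.

Lemma Z_exists_least (P : Z -> Prop) (b : Z) :
  (forall j, P j -> b <= j) -> (exists j, P j) -> exists j, P j /\ forall i, i < j -> ~ P i.
Proof.
  intros Hb [j Hj]. induction j as [j IH] using (well_founded_ind (Zwf_well_founded b)).
  destruct (classic (exists i, i < j /\ P i)) as [[i [Hij Hi]]|Hnone].
  - apply (IH i); [|exact Hi]. split; [apply Hb|]; assumption.
  - exists j. split; [exact Hj|]. intros i Hij Hi. apply Hnone. now exists i.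
Qed.

Lemma leftmost_zero_pair_eca_left y k :
  leftmost_zero_pair y k -> y (k - 2) = true -> leftmost_zero_pair (eca 172 y) (k - 1).
Proof.
  intros [Hk Hleft] Hk2. split.
  - split.
    + rewrite eca172E. replace (k - 1 - 1) with (k - 2) by lia. rewrite Hk2.
      replace (k - 1 + 1) with k by lia. apply Hk.
    + replace (k - 1 + 1) with k by lia. apply zero_pair_eca, Hk.
  - intros i Hi Hp. destruct (zero_pair_eca_inv y i Hp);
      [apply (Hleft i)|apply (Hleft (i + 1))]; auto; lia.
Qed.

Lemma leftmost_zero_pair_eca_stay y k :
  leftmost_zero_pair y k -> y (k - 2) = false ->
  leftmost_zero_pair (eca 172 y) k /\ eca 172 y (k - 2) = true.
Proof.
  intros [[Hk0 Hk1] Hleft] Hk2.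
  assert (Hk1' : y (k - 1) = true).
  { destruct (y (k - 1)) eqn:E; [reflexivity|exfalso].
    apply (Hleft (k - 1)); [lia|split; [exact E|]]. now replace (k - 1 + 1) with k by lia. }
  assert (Hk3 : y (k - 3) = true).
  { destruct (y (k - 3)) eqn:E; [reflexivity|exfalso].
    apply (Hleft (k - 3)); [lia|split; [exact E|]]. now replace (k - 3 + 1) with (k - 2) by lia. }
  split; [split|].
  - now apply zero_pair_eca.
  - intros i Hi Hp. destruct (Z.eq_dec i (k - 1)) as [->|Hne].
    + destruct Hp as [Hp _]. rewrite eca172E in Hp.
      replace (k - 1 - 1) with (k - 2) in Hp by lia. rewrite Hk2 in Hp. congruence.
    + destruct (zero_pair_eca_inv y i Hp);
      [apply (Hleft i)|apply (Hleft (i + 1))]; auto; lia.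
  - rewrite eca172E. replace (k - 2 - 1) with (k - 3) by lia.
    replace (k - 2 + 1) with (k - 1) by lia. now rewrite Hk3.
Qed.

Lemma leftmost_zero_pair_eca y k :
  leftmost_zero_pair y k -> exists k', k' <= k /\ leftmost_zero_pair (eca 172 y) k'.
Proof.
  intros H. destruct (y (k - 2)) eqn:E.
  - exists (k - 1). split; [lia|]. now apply leftmost_zero_pair_eca_left.
  - exists k. split; [lia|]. now apply leftmost_zero_pair_eca_stay.
Qed.

Lemma leftmost_zero_pair_eca2 y k :
  leftmost_zero_pair y k ->
  exists k', k' <= k - 1 /\ leftmost_zero_pair (eca 172 (eca 172 y)) k'.
Proof.
  intros H. destruct (y (k - 2)) eqn:E.
  - destruct (leftmost_zero_pair_eca _ _ (leftmost_zero_pair_eca_left y k H E))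
      as [k' [Hk' H']].
    exists k'. split; [lia|exact H'].
  - destruct (leftmost_zero_pair_eca_stay y k H E) as [H1 H2].
    exists (k - 1). split; [lia|]. now apply leftmost_zero_pair_eca_left.
Qed.

Lemma leftmost_zero_pair_iter y k (s : nat) :
  leftmost_zero_pair y k ->
  exists k', k' <= k - Z.of_nat s /\ leftmost_zero_pair (eca_iter 172 (2 * s) y) k'.
Proof.
  intros H. induction s as [|s [k1 [Hk1 H1]]].
  - exists k. split; [lia|exact H].
  - destruct (leftmost_zero_pair_eca2 _ _ H1) as [k2 [Hk2 H2]].
    exists k2. split; [lia|]. now replace (2 * S s)%nat with (S (S (2 * s))) by lia.
Qed.

Lemma zero_pair_free_patch_of_SInv172 u x :
  zero_pair_free (periodic u) -> SInv 172 u x -> zero_pair_free (patch u x).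
Proof.
  intros HP [w Hw] k0 Hk0.
  destruct (Z_exists_least (zero_pair (patch u x)) (-1)) as [k [Hk Hleft]].
  { intros j [A B]. destruct (Z_lt_le_dec j (-1)); [exfalso|lia].
    rewrite !patch_outside in A, B by lia. exact (HP j (conj A B)). }
  { now exists k0. }
  set (s := (Z.to_nat w + 2)%nat).
  destruct (leftmost_zero_pair_iter _ _ s (conj Hk Hleft)) as [k' [Hk' [Hk't _]]].
  set (t := (2 * s)%nat) in *.
  destruct (Hw t) as [a Ha].
  pose proof (zero_pair_free_iter _ t HP) as HPt.
  destruct (zero_pair_free_differs _ _ _ HPt Hk't) as [i1 [Hi1 Hd1]].
  destruct (zero_pair_free_differs _ _ _ HPt (zero_pair_iter _ _ t Hk)) as [i2 [Hi2 Hd2]].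
  apply Ha in Hd1. apply Ha in Hd2. unfold s in Hk'. lia.
Qed.

Lemma SInv172_iff u x :
  zero_pair_free (periodic u) -> (SInv 172 u x <-> zero_pair_free (patch u x)).
Proof.
  intros HP. split.
  - now apply zero_pair_free_patch_of_SInv172.
  - now apply SInv172_of_zero_pair_free.
Qed.

Fixpoint no_adjacent_zeros (l : list bool) : bool :=
  match l with
  | a :: ((b :: _) as l') => (a || b) && no_adjacent_zeros l'
  | _ => true
  end.

Lemma no_adjacent_zeros_app l1 l2 :
  no_adjacent_zeros (l1 ++ l2) =
  no_adjacent_zeros l1 && no_adjacent_zeros l2 && (last l1 true || hd true l2).
Proof.
  induction l1 as [|a l1 IH].
  - simpl. now destruct (no_adjacent_zeros l2).
  - destruct l1 as [|b l1].
    + destruct l2 as [|c l2]; [now destruct a|].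
      change ((a || c) && no_adjacent_zeros (c :: l2)
              = true && no_adjacent_zeros (c :: l2) && (a || c)).
      now destruct (a || c), (no_adjacent_zeros (c :: l2)).
    + change (no_adjacent_zeros ((a :: b :: l1) ++ l2))
        with ((a || b) && no_adjacent_zeros ((b :: l1) ++ l2)).
      rewrite IH. simpl.
      now destruct (a || b), (no_adjacent_zeros (b :: l1)), (no_adjacent_zeros l2).
Qed.

Lemma no_adjacent_zeros_nth l :
  no_adjacent_zeros l = true <->
  forall k, (S k < length l)%nat -> nth k l false || nth (S k) l false = true.
Proof.
  induction l as [|a [|b l] IH]; [simpl; split; auto; intros; lia..|].
  change (no_adjacent_zeros (a :: b :: l)) with ((a || b) && no_adjacent_zeros (b :: l)).
  rewrite andb_true_iff, IH. split.
  - intros [H1 H2] [|k] Hk; simpl in *; [exact H1|]. apply H2. lia.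
  - intros H. split; [apply (H 0%nat); simpl; lia|].
    intros k Hk. apply (H (S k)). simpl in *. lia.
Qed.

(** The cells [-1 .. |x|] of [p_u[x]]: every [00] of [p_u[x]] lies there when [p_u] has none. *)
Definition patch_window (u x : list bool) : list bool :=
  periodic u (-1) :: x ++ [periodic u (Z.of_nat (length x))].

Lemma patch_window_nth u x i :
  -1 <= i <= Z.of_nat (length x) -> patch u x i = nth (Z.to_nat (i + 1)) (patch_window u x) false.
Proof.
  intros Hi. unfold patch_window.
  destruct (Z.eq_dec i (-1)) as [->|]; [now rewrite patch_outside by lia|].
  replace (Z.to_nat (i + 1)) with (S (Z.to_nat i)) by lia. simpl.
  destruct (Z.eq_dec i (Z.of_nat (length x))) as [->|].
  - rewrite patch_outside by lia. now rewrite Nat2Z.id, app_nth2, Nat.sub_diag by lia.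
  - rewrite app_nth1 by lia. unfold patch.
    destruct (Z.leb_spec 0 i), (Z.ltb_spec i (Z.of_nat (length x))); simpl; auto; lia.
Qed.

Lemma zero_pair_free_patch_iff u x :
  zero_pair_free (periodic u) ->
  (zero_pair_free (patch u x) <-> no_adjacent_zeros (patch_window u x) = true).
Proof.
  intros HP. rewrite no_adjacent_zeros_nth.
  assert (Hlen : length (patch_window u x) = (length x + 2)%nat)
    by (unfold patch_window; simpl; rewrite length_app; simpl; lia).
  rewrite Hlen. split.
  - intros H k Hk. specialize (H (Z.of_nat k - 1)). unfold zero_pair in H.
    rewrite !patch_window_nth in H by lia.
    replace (Z.to_nat (Z.of_nat k - 1 + 1)) with k in H by lia.
    replace (Z.to_nat (Z.of_nat k - 1 + 1 + 1)) with (S k) in H by lia.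
    destruct (nth k _ false), (nth (S k) _ false); tauto.
  - intros H i [A B].
    destruct (Z_lt_le_dec i (-1)); [|destruct (Z_lt_le_dec i (Z.of_nat (length x)))].
    + rewrite !patch_outside in A, B by lia. exact (HP i (conj A B)).
    + rewrite !patch_window_nth in A, B by lia.
      specialize (H (Z.to_nat (i + 1)) ltac:(lia)).
      replace (S (Z.to_nat (i + 1))) with (Z.to_nat (i + 1 + 1)) in H by lia.
      now rewrite A, B in H.
    + rewrite !patch_outside in A, B by lia. exact (HP i (conj A B)).
Qed.

Definition no_adjacent_zeros_protocol (s e : bool) : protocol :=
  AliceNode (fun x => no_adjacent_zeros (s :: x))
    (AliceNode (fun x => last (s :: x) true)
       (BobNode (fun y => no_adjacent_zeros (y ++ [e])) (Leaf true) (Leaf false))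
       (BobNode (fun y => no_adjacent_zeros (y ++ [e]) && hd true (y ++ [e]))
          (Leaf true) (Leaf false)))
    (Leaf false).

Lemma depth_no_adjacent_zeros_protocol s e : depth (no_adjacent_zeros_protocol s e) = 3%nat.
Proof. reflexivity. Qed.

Lemma run_no_adjacent_zeros_protocol s e x y :
  run (no_adjacent_zeros_protocol s e) x y = no_adjacent_zeros ((s :: x) ++ (y ++ [e])).
Proof.
  cbn [run no_adjacent_zeros_protocol]. rewrite (no_adjacent_zeros_app (s :: x)).
  now destruct (no_adjacent_zeros (s :: x)), (last (s :: x) true),
    (no_adjacent_zeros (y ++ [e])), (hd true (y ++ [e])).
Qed.

Theorem mainTheorem9 :
  forall u : list bool, u <> nil ->
    exists C : nat, forall n : nat, D_le (SInv 172%Z u) n C.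
Proof.
  intros u Hu. exists 3%nat. intros n i Hi.
  destruct (classic (zero_pair_free (periodic u))) as [Hfree|Hpair].
  - exists (no_adjacent_zeros_protocol (periodic u (-1)) (periodic u (Z.of_nat n))).
    split; [now rewrite depth_no_adjacent_zeros_protocol|].
    intros x y Hx Hy.
    rewrite run_no_adjacent_zeros_protocol, SInv172_iff, zero_pair_free_patch_iff by exact Hfree.
    unfold patch_window. rewrite length_app, Hx, Hy, <- app_assoc.
    now replace (i + (n - i))%nat with n by lia.
  - apply not_all_not_ex in Hpair as [k Hk].
    exists (Leaf true). split; [simpl; lia|].
    intros x y _ _. split; [intros _; now apply (SInv172_of_periodic_zero_pair _ _ k)|reflexivity].
Qed.
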